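(* Let $P\in\mathbb{C}[X_1,\dots,X_n]_{int}$ be an internal polynomial of degree $d\in{}^*\mathbb{N}$. Then (i) $P$ is bounded if and only if $P$ is absolutely bounded; (ii) $P$ is infinitesimal if and only if $P$ is absolutely infinitesimal.
   Context: ${}^*\mathbb{C}$ is an ultrapower of $\mathbb{C}$ by a nonprincipal ultrafilter; ${}^b\mathbb{C}$ (resp. ${}^i\mathbb{C}$) denotes the elements $z$ with $|z|\le r$ for some standard real $r$ (resp. $|z|<r$ for every standard real $r>0$). For finite $n$, $\mathbb{C}[X_1,\dots,X_n]_{int}$ is the ultrapower of $\mathbb{C}[X_1,\dots,X_n]$; an internal polynomial $P=\sum_{|\nu|\le d}a_\nu X^\nu$ ($a_\nu\in{}^*\mathbb{C}$, $\nu\in{}^*\mathbb{N}^n$) is viewed as an internal function ${}^*\mathbb{C}^n\to{}^*\mathbb{C}$, and $|P|:=\sum_{|\nu|\le d}|a_\nu|X^\nu$. $P$ is bounded (resp. infinitesimal) if $P({}^b\mathbb{C}^n)\subset{}^b\mathbb{C}$ (resp. $\subset{}^i\mathbb{C}$), and absolutely bounded (resp. absolutely infinitesimal) if $|P|({}^b\mathbb{C}^n)\subset{}^b\mathbb{C}$ (resp. $\subset{}^i\mathbb{C}$). *)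

From HB Require Import structures.
From mathcomp Require Import all_boot all_order all_algebra.
From mathcomp Require Import reals.
From mathcomp Require Import complex.
From mathcomp Require Import mpoly.
Set Implicit Arguments. Unset Strict Implicit. Unset Printing Implicit Defensive.
Import Order.TTheory GRing.Theory Num.Theory.
Local Open Scope ring_scope.
Local Open Scope complex_scope.

Definition is_ultrafilter (I : Type) (U : (I -> Prop) -> Prop) : Prop :=
  [/\ U (fun _ => True),
      ~ U (fun _ => False),
      (forall A B : I -> Prop, U A -> U B -> U (fun i => A i /\ B i)),
      (forall A B : I -> Prop, (forall i, A i -> B i) -> U A -> U B)
    & (forall A : I -> Prop, U A \/ U (fun i => ~ A i))].

Definition nonprincipal (I : Type) (U : (I -> Prop) -> Prop) : Prop :=
  forall i0 : I, ~ U (fun i => i = i0).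

Section Ultra.
Variables (R : realType) (I : Type) (U : (I -> Prop) -> Prop).

(* Elements of *C are represented by sequences I -> R[i] (modulo U);
   all predicates below are invariant under U-a.e. equality. *)

Definition hbounded (z : I -> R[i]) : Prop :=
  exists r : R, U (fun i => `|z i| <= r%:C).

Definition hinfinitesimal (z : I -> R[i]) : Prop :=
  forall r : R, 0 < r -> U (fun i => `|z i| < r%:C).

Variable n : nat.

Definition hbounded_pt (z : I -> 'I_n -> R[i]) : Prop :=
  forall j : 'I_n, hbounded (fun i => z i j).

Definition abs_mpoly (p : {mpoly R[i][n]}) : {mpoly R[i][n]} :=
  \sum_(m <- msupp p) `|p@_m| *: 'X_[m].

(* An internal polynomial is represented by I -> {mpoly R[i][n]}
   (the ultrapower of C[X_1..X_n]); it acts on internal points pointwise. *)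
Definition ipoly_eval (P : I -> {mpoly R[i][n]}) (z : I -> 'I_n -> R[i])
  : I -> R[i] := fun i => (P i).@[z i].

Definition ipoly_abs (P : I -> {mpoly R[i][n]}) : I -> {mpoly R[i][n]} :=
  fun i => abs_mpoly (P i).

Definition ipoly_bounded (P : I -> {mpoly R[i][n]}) : Prop :=
  forall z, hbounded_pt z -> hbounded (ipoly_eval P z).

Definition ipoly_infinitesimal (P : I -> {mpoly R[i][n]}) : Prop :=
  forall z, hbounded_pt z -> hinfinitesimal (ipoly_eval P z).

Definition ipoly_abs_bounded (P : I -> {mpoly R[i][n]}) : Prop :=
  ipoly_bounded (ipoly_abs P).

Definition ipoly_abs_infinitesimal (P : I -> {mpoly R[i][n]}) : Prop :=
  ipoly_infinitesimal (ipoly_abs P).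

End Ultra.

From HB Require Import structures.
From mathcomp Require Import all_boot all_order all_algebra all_solvable all_field.
From mathcomp Require Import reals.
From mathcomp Require Import complex.
From mathcomp Require Import mpoly.
From mathcomp Require Import zify.
From Stdlib Require Import ClassicalEpsilon.
Set Implicit Arguments. Unset Strict Implicit. Unset Printing Implicit Defensive.
Import Order.TTheory GRing.Theory Num.Theory.
Local Open Scope ring_scope.
Local Open Scope complex_scope.

(* For a polynomial p = \sum_m c_m X^m and rho >= 0, averaging p against the
   characters of the finite torus {rho * om^j} (om a primitive N-th root of unity,
   N > deg p) isolates each coefficient; hence some point w of that torus
   satisfies |c_m| rho^|m| <= |p(w)| for every m, a discrete Cauchy estimate.
   With rho = 2r, every x with |x_l| <= r then satisfies
   |P|(x) <= \sum_m |c_m| (2r)^|m| 2^-|m| <= 2^n |p(w)|, a constant that does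
   not depend on the degree.  Applied index by index in the ultrapower, this
   controls |P| on a bounded point by P at another bounded point; the converse
   direction is the triangle inequality |P(z)| <= |P|(|z|). *)

(* The same argument as cyclotomic.C_prim_root_exists, which is stated for algC only. *)
Lemma closed_prim_root_exists (F : closedFieldType) (N : nat) :
  N%:R != 0 :> F -> {z : F | N.-primitive_root z}.
Proof.
move=> N_neq0; have N_gt0 : (0 < N)%N by case: N N_neq0; rewrite ?eqxx.
pose p : {poly F} := 'X^N - 1; have [r Dp] := closed_field_poly_normal p.
apply/sigW; rewrite (monicP _) ?monicXnsubC // scale1r in Dp.
have rn1: all N.-unity_root r by apply/allP=> z; rewrite -root_prod_XsubC -Dp.
have sz_r: (N < (size r).+1)%N.
  by rewrite -(size_prod_XsubC r id) -Dp size_XnsubC.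
have [|z] := hasP (has_prim_root N_gt0 rn1 _ sz_r); last by exists z.
by rewrite -separable_prod_XsubC -Dp separable_Xn_sub_1.
Qed.

Lemma sum_prim_root_expr (F : idomainType) (N e : nat) (w : F) :
  N.-primitive_root w -> \sum_(a < N) w ^+ (a * e) = if (N %| e)%N then N%:R else 0.
Proof.
move=> w_prim; under eq_bigr do rewrite mulnC exprM.
have we1 : (w ^+ e == 1) = (N %| e)%N.
  by rewrite -(expr0 w) (eq_prim_root_expr w_prim) mod0n.
case: ifP => N_dvd_e.
  rewrite (eqP (etrans we1 N_dvd_e)).
  by under eq_bigr do rewrite expr1n; rewrite sumr_const card_ord.
have : (w ^+ e - 1) * \sum_(a < N) (w ^+ e) ^+ a = 0.
  by rewrite -subrX1 -exprM mulnC exprM (prim_expr_order w_prim) expr1n subrr.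
by move/eqP; rewrite mulf_eq0 subr_eq0 we1 N_dvd_e => /eqP.
Qed.

Lemma exists_argmax_real (F : numDomainType) (J : finType) (j1 : J) (f : J -> F) :
  (forall j, f j \is Num.real) -> exists j0, forall j, f j <= f j0.
Proof.
move=> f_real.
suff [j0 Hj0] : exists j0, forall j, j \in enum J -> f j <= f j0.
  by exists j0 => j; apply: Hj0; rewrite mem_enum.
elim: (enum J) => [|x s [j0 IH]]; first by exists j1.
have [le_x_j0|le_j0_x] := orP (real_leVge (f_real x) (f_real j0)).
  by exists j0 => j; rewrite inE => /orP [/eqP -> //|]; apply: IH.
by exists x => j; rewrite inE => /orP [/eqP -> //|/IH/le_trans]; apply.
Qed.

Lemma sumr_geom_le (F : numFieldType) (x : F) (N : nat) :
  0 <= x < 1 -> \sum_(a < N) x ^+ a <= (1 - x)^-1.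
Proof.
case/andP=> x_ge0 x_lt1; have gt0_1x : 0 < 1 - x by rewrite subr_gt0.
rewrite -[X in _ <= X]mulr1 ler_pdivlMl // -opprB mulNr -subrX1 opprB.
by rewrite gerBl exprn_ge0.
Qed.

Lemma sum_monomial_geom_le (F : numFieldType) (n : nat) (x : F) (s : seq 'X_{1..n}) :
  uniq s -> 0 <= x < 1 -> \sum_(m <- s) \prod_(l < n) x ^+ m l <= (1 - x)^-1 ^+ n.
Proof.
move=> s_uniq x01; have x_ge0 : 0 <= x by case/andP: x01.
pose K := (\sum_(m <- s) mdeg m).+1.
have ltmK m : m \in s -> forall l, (m l < K)%N.
  move=> m_s l; rewrite ltnS (big_rem m m_s) /=; apply: leq_trans (leq_addr _ _).
  by rewrite mdegE (bigD1 l) //= leq_addr.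
pose phi (m : 'X_{1..n}) : {ffun 'I_n -> 'I_K} := [ffun l => inord (m l)].
have phiE m : m \in s -> forall l, phi m l = m l :> nat.
  by move=> m_s l; rewrite ffunE inordK ?ltmK.
pose G (f : {ffun 'I_n -> 'I_K}) := \prod_(l < n) x ^+ f l.
have G_ge0 f : 0 <= G f by apply: prodr_ge0 => l _; rewrite exprn_ge0.
have -> : \sum_(m <- s) \prod_(l < n) x ^+ m l = \sum_(f <- map phi s) G f.
  rewrite big_map !big_seq; apply: eq_bigr => m m_s; apply: eq_bigr => l _.
  by rewrite phiE.
have phi_uniq : uniq (map phi s).
  rewrite map_inj_in_uniq // => m1 m2 m1_s m2_s phi12; apply/mnmP => l.
  by rewrite -(phiE _ m1_s) -(phiE _ m2_s) phi12.
apply: (@le_trans _ _ (\sum_f G f)).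
  rewrite big_uniq // [X in _ <= X](bigID (mem (map phi s))) /=.
  by rewrite lerDl sumr_ge0.
rewrite -(bigA_distr_bigA (fun (l : 'I_n) (a : 'I_K) => x ^+ a)) /=.
rewrite -[in X in _ <= X](card_ord n) -prodr_const.
apply: ler_prod => l _; rewrite sumr_geom_le // andbT.
by apply: sumr_ge0 => a _; rewrite exprn_ge0.
Qed.

Section CauchyEstimate.
Variables (C : numClosedFieldType) (n : nat).
Implicit Types (p : {mpoly C[n]}) (k m : 'X_{1..n}).

Lemma sum_torus_character (N : nat) (om : C) k m :
  N.-primitive_root om -> (forall l, k l < N)%N -> (forall l, m l < N)%N ->
  \sum_(j : {ffun 'I_n -> 'I_N}) \prod_l om ^+ (j l * (k l + (N - m l)))
    = (k == m)%:R * N%:R ^+ n.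
Proof.
move=> om_prim ltkN ltmN.
rewrite -(bigA_distr_bigA (fun l (a : 'I_N) => om ^+ (a * (k l + (N - m l))))) /=.
under eq_bigr do rewrite (sum_prim_root_expr _ om_prim).
have [<-|k_neq_m] := eqVneq k m.
  rewrite mul1r -[in RHS](card_ord n) -prodr_const; apply: eq_bigr => l _.
  by rewrite subnKC ?dvdnn // ltnW.
have [l kml] : exists l, k l != m l.
  apply/existsP; apply: contra_neqT k_neq_m; rewrite negb_exists => /forallP km.
  by apply/mnmP => l; apply/eqP/negbNE/km.
rewrite mul0r (bigD1 l) //= ifF ?mul0r //; apply/negP => /dvdnP[q].
by move: (ltkN l) (ltmN l) kml; case: q => [|[|q]] /=; lia.
Qed.

Lemma coef_as_sum_supp p m (g : 'X_{1..n} -> C) :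
  \sum_(k <- msupp p) p@_k * g k * (k == m)%:R = p@_m * g m.
Proof.
have -> : p@_m = \sum_(k <- msupp p) p@_k * (k == m)%:R.
  rewrite {1}(mpolyE p) raddf_sum; apply: eq_bigr => k _.
  by rewrite /= mcoeffZ mcoeffX.
rewrite mulr_suml; apply: eq_bigr => k _.
by case: eqP => [->|_]; rewrite ?eqxx ?mulr1 ?mulr0 ?mul0r.
Qed.

Lemma torus_sum_meval (N : nat) (om rho : C) p m :
  N.-primitive_root om -> (msize p <= N)%N -> (forall l, m l < N)%N ->
  \sum_(j : {ffun 'I_n -> 'I_N})
      p.@[fun l => rho * om ^+ j l] * \prod_l om ^+ (j l * (N - m l))
    = p@_m * \prod_l rho ^+ m l * N%:R ^+ n.
Proof.
move=> om_prim le_pN ltmN.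
have ltkN k : k \in msupp p -> forall l, (k l < N)%N.
  move=> /msize_mdeg_lt lt_kp l; apply: leq_trans le_pN.
  by apply: leq_ltn_trans lt_kp; rewrite mdegE (bigD1 l) //= leq_addr.
under [LHS]eq_bigr do rewrite mevalE mulr_suml.
rewrite exchange_big /= -(coef_as_sum_supp p m (fun k => \prod_l rho ^+ k l)).
rewrite mulr_suml !big_seq; apply: eq_bigr => k kp.
rewrite -[RHS]mulrA -(sum_torus_character om_prim (ltkN k kp) ltmN) mulr_sumr.
apply: eq_bigr => j _; rewrite -!mulrA; congr (_ * _).
rewrite -!big_split /=; apply: eq_bigr => l _.
by rewrite exprMn -mulrA -!exprM -exprD mulnDr.
Qed.

Lemma cauchy_estimate p (rho : C) : 0 <= rho ->
  exists2 w : 'I_n -> C, forall l, `|w l| = rho &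
    forall m, `|p@_m| * \prod_l rho ^+ m l <= `|p.@[w]|.
Proof.
move=> rho_ge0; pose N := (msize p).+1.
have [|om om_prim] := @closed_prim_root_exists C N; first by rewrite pnatr_eq0.
have norm_om : `|om| = 1.
  apply/eqP; rewrite -(pexpr_eq1 (prim_order_gt0 om_prim)) ?normr_ge0 //.
  by rewrite -normrX (prim_expr_order om_prim) normr1.
pose T (j : {ffun 'I_n -> 'I_N}) l := rho * om ^+ j l.
have [j0 max_j0] := exists_argmax_real [ffun=> ord0]
  (fun j => normr_real (p.@[T j])).
exists (T j0) => [l|m]; first by rewrite normrM normrX norm_om expr1n mulr1 ger0_norm.
have [m_supp|/memN_msupp_eq0->] := boolP (m \in msupp p); last first.
  by rewrite normr0 mul0r.
have ltmN l : (m l < N)%N.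
  rewrite ltnS; apply: leq_trans (ltnW (msize_mdeg_lt m_supp)).
  by rewrite mdegE (bigD1 l) //= leq_addr.
have N_gt0 : 0 < N%:R ^+ n :> C by rewrite exprn_gt0 ?ltr0n.
have prod_ge0 : 0 <= \prod_l rho ^+ m l by apply: prodr_ge0 => l _; rewrite exprn_ge0.
rewrite -(ler_pM2r N_gt0) -(ger0_norm prod_ge0) -{1}(ger0_norm (ltW N_gt0)) -!normrM.
rewrite -(torus_sum_meval rho om_prim (leqnSn _) ltmN).
apply: le_trans (ler_norm_sum _ _ _) _.
have norm_term j : `|p.@[T j] * \prod_l om ^+ (j l * (N - m l))| = `|p.@[T j]|.
  by rewrite normrM normr_prod big1 ?mulr1 // => l _; rewrite normrX norm_om expr1n.
under eq_bigr do rewrite norm_term.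
apply: le_trans (ler_sum _ (fun j _ => max_j0 j)) _.
by rewrite sumr_const card_ffun !card_ord -natrX mulr_natr.
Qed.

End CauchyEstimate.

Section AbsMpoly.
Variables (R : realType) (n : nat).
Implicit Types (p : {mpoly R[i][n]}) (v : 'I_n -> R[i]).

Lemma meval_abs_mpoly p v :
  (abs_mpoly p).@[v] = \sum_(m <- msupp p) `|p@_m| * \prod_l v l ^+ m l.
Proof.
by rewrite /abs_mpoly raddf_sum; apply: eq_bigr => m _; rewrite /= mevalZ mevalX.
Qed.

Lemma norm_meval_le_abs p v : `|p.@[v]| <= `|(abs_mpoly p).@[fun l => `|v l|]|.
Proof.
rewrite meval_abs_mpoly [X in _ <= X]ger0_norm; last first.
  apply: sumr_ge0 => m _; apply: mulr_ge0 => //.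
  by apply: prodr_ge0 => l _; rewrite exprn_ge0.
rewrite mevalE; apply: le_trans (ler_norm_sum _ _ _) _; apply: ler_sum => m _.
by rewrite normrM normr_prod; under eq_bigr do rewrite normrX.
Qed.

Lemma abs_meval_le_torus p (r : R[i]) : 0 <= r ->
  exists w : 'I_n -> R[i], (forall l, `|w l| = 2 * r) /\
    forall v, (forall l, `|v l| <= r) -> `|(abs_mpoly p).@[v]| <= `|p.@[w]| * 2 ^+ n.
Proof.
move=> r_ge0; have two_r_ge0 : 0 <= 2 * r by rewrite mulr_ge0.
have [w norm_w coef_le] := cauchy_estimate p two_r_ge0.
exists w; split => // v v_le_r; rewrite meval_abs_mpoly.
have half01 : 0 <= (2^-1 : R[i]) < 1 by rewrite invr_ge0 ler0n invf_lt1 ?ltr0n ?ltr1n.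
have -> : 2 = (1 - 2^-1)^-1 :> R[i].
  by rewrite [X in X - _](splitr 1) mul1r addrK invrK.
apply: le_trans (ler_norm_sum _ _ _) _.
apply: (@le_trans _ _ (\sum_(m <- msupp p) `|p.@[w]| * \prod_l (2^-1) ^+ m l)).
  apply: ler_sum => m _; rewrite normrM normr_id normr_prod.
  have split_r : \prod_l r ^+ m l = \prod_l (2 * r) ^+ m l * \prod_l (2^-1) ^+ m l.
    rewrite -big_split; apply: eq_bigr => l _ /=.
    by rewrite -exprMn mulrAC divff ?mul1r // pnatr_eq0.
  apply: (@le_trans _ _ (`|p@_m| * \prod_l r ^+ m l)).
    apply: ler_wpM2l => //; apply: ler_prod => l _.
    by rewrite normrX exprn_ge0 //= lerXn2r ?nnegrE.
  rewrite split_r mulrA ler_wpM2r ?coef_le //.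
  by apply: prodr_ge0 => l _; rewrite exprn_ge0 ?invr_ge0.
by rewrite -mulr_sumr ler_wpM2l // sum_monomial_geom_le ?msupp_uniq.
Qed.

End AbsMpoly.

Section UltrapowerBounds.
Variables (R : realType) (I : Type) (U : (I -> Prop) -> Prop).
Hypothesis hU : is_ultrafilter U.
Implicit Types (a b : I -> R[i]).

Lemma ultrafilterS (A B : I -> Prop) : (forall i, A i -> B i) -> U A -> U B.
Proof. by case: hU => _ _ _ + _; apply. Qed.

Lemma ultrafilterI (A B : I -> Prop) : U A -> U B -> U (fun i => A i /\ B i).
Proof. by case: hU => _ _ + _ _; apply. Qed.

Lemma ultrafilterT (A : I -> Prop) : (forall i, A i) -> U A.
Proof. by case: hU => UT _ _ _ _ hA; apply: ultrafilterS UT. Qed.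

Lemma hbounded_le a b (c : R) : 0 <= c -> U (fun i => `|a i| <= `|b i| * c%:C) ->
  hbounded U b -> hbounded U a.
Proof.
move=> c_ge0 le_ab [r b_le_r]; exists (r * c).
apply: ultrafilterS (ultrafilterI le_ab b_le_r) => i [/le_trans le_a b_le].
by rewrite rmorphM; apply: le_a; apply: ler_wpM2r; rewrite ?ler0c.
Qed.

Lemma hinfinitesimal_le a b (c : R) : 0 < c -> U (fun i => `|a i| <= `|b i| * c%:C) ->
  hinfinitesimal U b -> hinfinitesimal U a.
Proof.
move=> c_gt0 le_ab b_small eps eps_gt0.
apply: ultrafilterS (ultrafilterI le_ab (b_small _ (divr_gt0 eps_gt0 c_gt0))).
move=> i [/le_lt_trans le_a b_lt]; apply: le_a.
by rewrite -[eps](divfK (lt0r_neq0 c_gt0)) rmorphM /= ltr_pM2r // ltcE /= eqxx.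
Qed.

Variable n : nat.
Implicit Types (z : I -> 'I_n -> R[i]) (P : I -> {mpoly R[i][n]}).

Lemma hbounded_pt_uniform z : hbounded_pt U z ->
  exists2 r : R, 0 <= r & U (fun i => forall l, `|z i l| <= r%:C).
Proof.
move=> zb; suff [r r_ge0 le_r] : exists2 r : R, 0 <= r &
    U (fun i => forall l, l \in enum 'I_n -> `|z i l| <= r%:C).
  by exists r => //; apply: ultrafilterS le_r => i le_ri l; rewrite le_ri ?mem_enum.
elim: (enum 'I_n) => [|l0 s [r r_ge0 le_r]]; first by exists 0; last exact: ultrafilterT.
have [r0 le_r0] := zb l0; exists (r + `|r0|); first by rewrite addr_ge0.
apply: ultrafilterS (ultrafilterI le_r le_r0) => i [le_ri le_r0i] l.
rewrite inE => /predU1P [->|l_s].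
  by apply: le_trans le_r0i _; rewrite lecR (le_trans (ler_norm r0)) // lerDr.
by apply: le_trans (le_ri l l_s) _; rewrite lecR lerDl.
Qed.

Lemma hbounded_pt_norm z : hbounded_pt U z -> hbounded_pt U (fun i l => `|z i l|).
Proof.
move=> zb l; have [r le_r] := zb l; exists r.
by apply: ultrafilterS le_r => i; rewrite normr_id.
Qed.

Lemma ipoly_abs_dominated P z : hbounded_pt U z ->
  exists2 w, hbounded_pt U w &
    U (fun i => `|ipoly_eval (ipoly_abs P) z i| <= `|ipoly_eval P w i| * (2 ^+ n)%:C).
Proof.
move=> /hbounded_pt_uniform [r r_ge0 le_r].
have rC_ge0 : 0 <= r%:C by rewrite ler0c.
have torus i := abs_meval_le_torus (P i) rC_ge0.
pose w i := proj1_sig (constructive_indefinite_description _ (torus i)).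
have w_spec i := proj2_sig (constructive_indefinite_description _ (torus i)).
exists w.
  move=> l; exists (2 * r); apply: ultrafilterT => i.
  by rewrite (w_spec i).1 rmorphM rmorph_nat.
apply: ultrafilterS le_r => i /(w_spec i).2; rewrite rmorphXn rmorph_nat; exact.
Qed.

End UltrapowerBounds.

Theorem proposition1p4p4 (R : realType) (I : Type) (U : (I -> Prop) -> Prop)
  (hU : is_ultrafilter U) (hfree : nonprincipal U)
  (n : nat) (P : I -> {mpoly R[i][n]}) :
  (ipoly_bounded U P <-> ipoly_abs_bounded U P) /\
  (ipoly_infinitesimal U P <-> ipoly_abs_infinitesimal U P).
Proof.
have eval_le_abs z : U (fun i => `|ipoly_eval P z i|
    <= `|ipoly_eval (ipoly_abs P) (fun i l => `|z i l|) i| * 1%:C).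
  by apply: (ultrafilterT hU) => i; rewrite mulr1; apply: norm_meval_le_abs.
have two_gt0 : (0 : R) < 2 ^+ n by rewrite exprn_gt0.
split; split=> small z.
- case/(ipoly_abs_dominated hU P) => w /small Pw_bdd le_abs.
  exact: (hbounded_le hU (ltW two_gt0) le_abs Pw_bdd).
- move/(hbounded_pt_norm hU)/small; exact: (hbounded_le hU ler01 (eval_le_abs z)).
- case/(ipoly_abs_dominated hU P) => w /small Pw_small le_abs.
  exact: (hinfinitesimal_le hU two_gt0 le_abs Pw_small).
- move/(hbounded_pt_norm hU)/small; exact: (hinfinitesimal_le hU ltr01 (eval_le_abs z)).
Qed.
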